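(* Suppose the Assumption below holds. Then there exists a constant $\gamma_h\ge0$ such that $\sup_{\mathbf x\in\Omega}\|\mathcal H(\mathbf x)\|\le\gamma_h$.
   Context: Let $f,c_1,\dots,c_m:\mathbb R^n\to\mathbb R$ be twice continuously differentiable and $\Omega=\{\mathbf x\in\mathbb R^n: c_i(\mathbf x)=0,\ i=1,\dots,m\}$. Write $\nabla\mathbf c(\mathbf x)=[\nabla c_1(\mathbf x),\dots,\nabla c_m(\mathbf x)]$; $\mathcal P_{\mathbf x}$ is the orthogonal projection onto $\{\mathbf v:\nabla\mathbf c(\mathbf x)^\top\mathbf v=\mathbf 0\}$. Lagrangian $\mathcal L(\mathbf x,\boldsymbol\lambda)=f(\mathbf x)-\sum_i\lambda_ic_i(\mathbf x)$; $\boldsymbol\lambda^\star(\mathbf x)\in\arg\min_{\boldsymbol\lambda}\|\nabla_{\mathbf x}\mathcal L(\mathbf x,\boldsymbol\lambda)\|$; $\mathcal H(\mathbf x)=\mathcal P_{\mathbf x}^\top\nabla^2_{\mathbf x\mathbf x}\mathcal L(\mathbf x,\boldsymbol\lambda^\star(\mathbf x))\mathcal P_{\mathbf x}$. Matrix norms are spectral. Assumption: (a) $\nabla f,\nabla^2 f,\nabla c_i,\nabla^2 c_i$ are Lipschitz over $\Omega$; (b) $\sup_{\Omega}\|\nabla f\|\le\gamma_{f,1}$, $\sup_\Omega\|\nabla^2 f\|\le\gamma_{f,2}$, $\sup_\Omega\|\nabla c_i\|\le\gamma_{c_i,1}$, $\sup_\Omega\|\nabla^2c_i\|\le\gamma_{c_i,2}$;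 (c) there is $\sigma_0>0$ with $\sigma_{\min}(\nabla\mathbf c(\mathbf x))\ge\sigma_0$ on $\Omega$. *)

(* Points of R^n are row vectors 'rV[R]_n
   (the domain of the functions); gradients, multipliers and other algebraic
   vectors are column vectors 'cV[R]_n. *)
From HB Require Import structures.
From mathcomp Require Import all_boot all_order all_algebra.
From mathcomp Require Import all_classical all_reals all_analysis.
Set Implicit Arguments. Unset Strict Implicit. Unset Printing Implicit Defensive.
Import Order.TTheory GRing.Theory Num.Theory.
Import numFieldNormedType.Exports.
Local Open Scope classical_set_scope.
Local Open Scope ring_scope.

Section Defs.
Variable R : realType.

Definition enorm (p q : nat) (v : 'M[R]_(p, q)) : R :=
  Num.sqrt (\sum_(i < p) \sum_(j < q) v i j ^+ 2).

Definition specnorm (p q : nat) (A : 'M[R]_(p, q)) : R :=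
  sup [set enorm (A *m v) | v in [set v : 'cV[R]_q | enorm v <= 1]].

Definition sigma_min (p q : nat) (A : 'M[R]_(p, q)) : R :=
  inf [set enorm (A *m w) | w in [set w : 'cV[R]_q | enorm w = 1]].

Definition ebasis (n : nat) (i : 'I_n) : 'rV[R]_n := delta_mx 0 i.

Definition grad (n : nat) (f : 'rV[R]_n -> R) (x : 'rV[R]_n) : 'cV[R]_n :=
  \col_i derive f x (ebasis i).

Definition hess (n : nat) (f : 'rV[R]_n -> R) (x : 'rV[R]_n) : 'M[R]_n :=
  \matrix_(i, j) derive (fun y => derive f y (ebasis i)) x (ebasis j).

Definition C2 (n : nat) (f : 'rV[R]_n -> R) : Prop :=
  (forall x, differentiable f x) /\
  (forall i x, differentiable (fun y => derive f y (ebasis i)) x) /\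
  (forall i j, continuous (fun x => hess f x i j)).

Definition gradc (n m : nat) (c : 'I_m -> 'rV[R]_n -> R) (x : 'rV[R]_n)
  : 'M[R]_(n, m) := \matrix_(k, i) grad (c i) x k 0.

Definition feas (n m : nat) (c : 'I_m -> 'rV[R]_n -> R) : set 'rV[R]_n :=
  [set x | forall i, c i x = 0].

Definition lagr (n m : nat) (f : 'rV[R]_n -> R) (c : 'I_m -> 'rV[R]_n -> R)
  (x : 'rV[R]_n) (lam : 'cV[R]_m) : R :=
  f x - \sum_(i < m) lam i 0 * c i x.

Definition gradL n m f c (x : 'rV[R]_n) (lam : 'cV[R]_m) : 'cV[R]_n :=
  grad (fun y => @lagr n m f c y lam) x.

Definition hessL n m f c (x : 'rV[R]_n) (lam : 'cV[R]_m) : 'M[R]_n :=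
  hess (fun y => @lagr n m f c y lam) x.

Definition is_orth_proj_kerT (n m : nat) (A : 'M[R]_(n, m)) (P : 'M[R]_n) : Prop :=
  (forall v : 'cV[R]_n, A^T *m (P *m v) = 0) /\
  (forall v w : 'cV[R]_n, A^T *m w = 0 -> (v - P *m v)^T *m w = 0).

Definition lipschitz_vec n p (S : set 'rV[R]_n) (g : 'rV[R]_n -> 'cV[R]_p) : Prop :=
  exists L : R, forall x y, S x -> S y -> enorm (g x - g y) <= L * enorm (x - y).

Definition lipschitz_mat n p (S : set 'rV[R]_n) (g : 'rV[R]_n -> 'M[R]_p) : Prop :=
  exists L : R, forall x y, S x -> S y -> specnorm (g x - g y) <= L * enorm (x - y).

End Defs.

(* By the least-squares property, lambda*(x) does at least as well as the zero
   multiplier, so grad c(x) lambda*(x) has norm at most 2 ||grad f(x)||; the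
   singular-value bound then gives |lambda*_i(x)| <= 2 gamma_f1 / sigma0.  The
   Hessian of the Lagrangian at lambda*(x) is therefore bounded entrywise, and
   the projection P_x, a contraction, has entries of modulus at most 1, so the
   projected Hessian is bounded entrywise and hence in spectral norm. *)
From HB Require Import structures.
From mathcomp Require Import all_boot all_order all_algebra.
From mathcomp Require Import all_classical all_reals all_analysis.
From mathcomp Require Import ring lra.
Import Order.TTheory GRing.Theory Num.Theory.
Import numFieldNormedType.Exports.
Local Open Scope classical_set_scope.
Local Open Scope ring_scope.

Section Norms.
Set Implicit Arguments. Unset Strict Implicit.
Context {R : realType}.

Lemma sumsq_ge0 p q (v : 'M[R]_(p, q)) :
  0 <= \sum_(i < p) \sum_(j < q) v i j ^+ 2.
Proof. by apply: sumr_ge0 => i _; apply: sumr_ge0 => j _; exact: sqr_ge0. Qed.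

Lemma enorm_ge0 p q (v : 'M[R]_(p, q)) : 0 <= enorm v.
Proof. exact: sqrtr_ge0. Qed.

Lemma enorm_sq p q (v : 'M[R]_(p, q)) :
  enorm v ^+ 2 = \sum_(i < p) \sum_(j < q) v i j ^+ 2.
Proof. by rewrite sqr_sqrtr // sumsq_ge0. Qed.

Lemma enorm0 p q : enorm (0 : 'M[R]_(p, q)) = 0.
Proof.
rewrite /enorm big1 ?sqrtr0 // => i _; rewrite big1 // => j _.
by rewrite mxE expr0n.
Qed.

Lemma enormZ p q k (v : 'M[R]_(p, q)) : enorm (k *: v) = `|k| * enorm v.
Proof.
rewrite /enorm -sqrtr_sqr -sqrtrM ?sqr_ge0 //; congr Num.sqrt.
rewrite mulr_sumr; apply: eq_bigr => i _; rewrite mulr_sumr.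
by apply: eq_bigr => j _; rewrite mxE exprMn.
Qed.

Lemma enorm_delta q (k : 'I_q) : enorm (delta_mx k 0 : 'cV[R]_q) = 1.
Proof.
rewrite /enorm (bigD1 k) //= big_ord1 mxE !eqxx /= expr1n.
rewrite big1 ?addr0 ?sqrtr1 //.
by move=> i ik; rewrite big_ord1 mxE (negbTE ik) /= expr0n.
Qed.

Lemma le_sum_entry p q (F : 'I_p -> 'I_q -> R) i j :
  (forall i j, 0 <= F i j) -> F i j <= \sum_(i < p) \sum_(j < q) F i j.
Proof.
move=> F0; rewrite (bigD1 i) //= (bigD1 j) //= -addrA lerDl.
apply: addr_ge0; first by apply: sumr_ge0 => k _; exact: F0.
by apply: sumr_ge0 => k _; apply: sumr_ge0 => l _; exact: F0.
Qed.

Lemma entry_le_enorm p q (v : 'M[R]_(p, q)) i j : `|v i j| <= enorm v.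
Proof.
rewrite -sqrtr_sqr /enorm ler_sqrt ?sumsq_ge0 //.
by apply: (@le_sum_entry p q (fun i j => v i j ^+ 2)) => *; exact: sqr_ge0.
Qed.

Lemma enorm_le_sum_abs p q (v : 'M[R]_(p, q)) :
  enorm v <= \sum_(i < p) \sum_(j < q) `|v i j|.
Proof.
set S := \sum_(i < p) \sum_(j < q) `|v i j|.
have S0 : 0 <= S by apply: sumr_ge0 => i _; apply: sumr_ge0.
rewrite -(ger0_norm S0) -sqrtr_sqr /enorm ler_sqrt ?sqr_ge0 //.
apply: (@le_trans _ _ (\sum_(i < p) \sum_(j < q) `|v i j| * S)).
  apply: ler_sum => i _; apply: ler_sum => j _.
  rewrite -real_normK ?num_real // expr2 ler_wpM2l //.
  exact: (@le_sum_entry p q (fun i j => `|v i j|)).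
by rewrite expr2; under eq_bigr do rewrite -mulr_suml; rewrite -mulr_suml.
Qed.

(* |z|^2 <= 2|y|^2 + 2|y - z|^2 <= 4|y|^2: no triangle inequality needed. *)
Lemma enorm_le2 p q (y z : 'M[R]_(p, q)) :
  enorm (y - z) <= enorm y -> enorm z <= 2 * enorm y.
Proof.
move=> yz; have y0 := enorm_ge0 y; have yz0 := enorm_ge0 (y - z).
rewrite -(@ger0_norm _ (2 * enorm y)) ?mulr_ge0 //.
rewrite -sqrtr_sqr /enorm ler_sqrt ?sqr_ge0 //.
apply: (@le_trans _ _ (\sum_(i < p) \sum_(j < q)
   (2 * y i j ^+ 2 + 2 * (y - z) i j ^+ 2))).
  apply: ler_sum => i _; apply: ler_sum => j _; rewrite !mxE.
  have : 0 <= (y i j + (y i j - z i j)) ^+ 2 by exact: sqr_ge0.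
  nra.
have -> : \sum_(i < p) \sum_(j < q) (2 * y i j ^+ 2 + 2 * (y - z) i j ^+ 2) =
    2 * enorm y ^+ 2 + 2 * enorm (y - z) ^+ 2.
  rewrite !enorm_sq !mulr_sumr -big_split; apply: eq_bigr => i _.
  by rewrite !mulr_sumr -big_split.
have := ler_pM yz0 yz0 yz yz; rewrite -!expr2 -/(enorm y) exprMn; lra.
Qed.

End Norms.

Section Operators.
Set Implicit Arguments. Unset Strict Implicit.
Context {R : realType}.

Lemma enorm_mulmx_le_sum_abs p q (A : 'M[R]_(p, q)) (v : 'cV[R]_q) :
  enorm v <= 1 -> enorm (A *m v) <= \sum_(i < p) \sum_(k < q) `|A i k|.
Proof.
move=> v1; apply: (le_trans (enorm_le_sum_abs _)).
apply: ler_sum => i _; rewrite big_ord1 mxE.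
apply: le_trans; first exact: ler_norm_sum.
apply: ler_sum => k _; rewrite normrM -[X in _ <= X]mulr1 ler_wpM2l //.
exact: le_trans (entry_le_enorm _ _ _) v1.
Qed.

Lemma enorm_mulmx_le_specnorm p q (A : 'M[R]_(p, q)) (v : 'cV[R]_q) :
  enorm v <= 1 -> enorm (A *m v) <= specnorm A.
Proof.
move=> v1; apply: sup_upper_bound; last by exists v.
split; first by exists (enorm (A *m v)), v.
exists (\sum_(i < p) \sum_(k < q) `|A i k|) => _ [w w1 <-].
exact: enorm_mulmx_le_sum_abs.
Qed.

Lemma entry_le_specnorm p q (A : 'M[R]_(p, q)) i k : `|A i k| <= specnorm A.
Proof.
have -> : A i k = col k A i 0 by rewrite mxE.
apply: le_trans (entry_le_enorm _ _ _) _.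
by rewrite colE; apply: enorm_mulmx_le_specnorm; rewrite enorm_delta.
Qed.

Lemma specnorm_le_entry_bound p q (A : 'M[R]_(p, q)) a :
  (forall i k, `|A i k| <= a) -> specnorm A <= (p * q)%:R * a.
Proof.
move=> Aa; apply: ge_sup.
  by exists (enorm (A *m (0 : 'cV[R]_q))), 0 => //; rewrite /mkset enorm0.
move=> _ [w w1 <-]; apply: le_trans (enorm_mulmx_le_sum_abs _ w1) _.
apply: (@le_trans _ _ (\sum_(i < p) \sum_(k < q) a)).
  by apply: ler_sum => i _; apply: ler_sum => k _.
under eq_bigr do rewrite sumr_const card_ord.
by rewrite sumr_const card_ord -mulrnA mulr_natl mulnC.
Qed.

Lemma entry_mulmx_le p q r (A : 'M[R]_(p, q)) (B : 'M[R]_(q, r)) a b :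
  (forall i k, `|A i k| <= a) -> (forall k j, `|B k j| <= b) ->
  forall i j, `|(A *m B) i j| <= q%:R * (a * b).
Proof.
move=> Aa Bb i j; rewrite mxE; apply: le_trans (ler_norm_sum _ _ _) _.
apply: (@le_trans _ _ (\sum_(k < q) (a * b))).
  by apply: ler_sum => k _; rewrite normrM ler_pM.
by rewrite sumr_const card_ord mulr_natl.
Qed.

Lemma entry_trmx_mulmx_mulmx_le p q (P : 'M[R]_(p, q)) (H : 'M[R]_p) b :
  (forall i j, `|P i j| <= 1) -> (forall i j, `|H i j| <= b) ->
  forall i j, `|(P^T *m H *m P) i j| <= p%:R * (p%:R * b).
Proof.
move=> P1 Hb i j.
have PT1 i' j' : `|P^T i' j'| <= 1 by rewrite mxE.
by have := entry_mulmx_le (entry_mulmx_le PT1 Hb) P1 i j; rewrite mul1r mulr1.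
Qed.

Lemma enorm_mulmx_ge_sigma_min p q (A : 'M[R]_(p, q)) s (w : 'cV[R]_q) :
  s <= sigma_min A -> s * enorm w <= enorm (A *m w).
Proof.
move=> sA.
have [w0|wn0] := eqVneq (enorm w) 0; first by rewrite w0 mulr0 enorm_ge0.
have wpos : 0 < enorm w by rewrite lt_neqAle eq_sym wn0 enorm_ge0.
have unit_w : enorm ((enorm w)^-1 *: w) = 1.
  by rewrite enormZ ger0_norm ?invr_ge0 ?enorm_ge0 // mulVf.
have : sigma_min A <= enorm (A *m ((enorm w)^-1 *: w)).
  apply: ge_inf; last by exists ((enorm w)^-1 *: w).
  by exists 0 => _ [w' _ <-]; exact: enorm_ge0.
rewrite -scalemxAr enormZ ger0_norm ?invr_ge0 ?enorm_ge0 // => sAw.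
have := ler_wpM2r (ltW wpos) (le_trans sA sAw).
by rewrite mulrAC mulVf ?mul1r.
Qed.

Lemma orth_proj_kerT_contract p q (A : 'M[R]_(p, q)) P (v : 'cV[R]_p) :
  is_orth_proj_kerT A P -> enorm (P *m v) <= enorm v.
Proof.
case=> PA Porth; have := Porth v (P *m v) (PA v).
set u := P *m v; clearbody u.
move/matrixP/(_ 0 0); rewrite !mxE => vu_u.
rewrite /enorm ler_sqrt ?sumsq_ge0 // -subr_ge0 -sumrB.
have -> : \sum_(i < p) (\sum_(j < 1) v i j ^+ 2 - \sum_(j < 1) u i j ^+ 2) =
    \sum_(i < p) (v i 0 - u i 0) ^+ 2 + 2 * \sum_(j < p) (v - u)^T 0 j * u j 0.
  rewrite mulr_sumr -big_split; apply: eq_bigr => i _.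
  by rewrite !big_ord1 !mxE /=; ring.
by rewrite vu_u mulr0 addr0; apply: sumr_ge0 => i _; exact: sqr_ge0.
Qed.

Lemma orth_proj_kerT_entry_le1 p q (A : 'M[R]_(p, q)) P :
  is_orth_proj_kerT A P -> forall a b, `|P a b| <= 1.
Proof.
move=> PA a b.
have -> : P a b = (P *m (delta_mx b 0 : 'cV[R]_p)) a 0 by rewrite -colE mxE.
apply: le_trans (entry_le_enorm _ a 0) _; rewrite -(enorm_delta b).
exact: orth_proj_kerT_contract _ PA.
Qed.

Lemma lsq_enorm_mulmx_le p q (A : 'M[R]_(p, q)) (g : 'cV[R]_p)
    (lam : 'cV[R]_q) :
  (forall mu, enorm (g - A *m lam) <= enorm (g - A *m mu)) ->
  enorm (A *m lam) <= 2 * enorm g.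
Proof. by move=> /(_ 0); rewrite mulmx0 subr0; exact: enorm_le2. Qed.

Lemma lsq_solution_entry_le p q (A : 'M[R]_(p, q)) (g : 'cV[R]_p)
    (lam : 'cV[R]_q) s :
  0 < s -> s <= sigma_min A ->
  (forall mu, enorm (g - A *m lam) <= enorm (g - A *m mu)) ->
  forall i, `|lam i 0| <= 2 * enorm g / s.
Proof.
move=> s0 sA lsq i; rewrite ler_pdivlMr // mulrC.
have sAlam := enorm_mulmx_ge_sigma_min lam sA.
apply: le_trans (le_trans sAlam (lsq_enorm_mulmx_le lsq)).
by rewrite ler_wpM2l ?(ltW s0) ?entry_le_enorm.
Qed.

End Operators.

Lemma derive_sub_sum (R : numFieldType) (V : normedModType R) (m : nat)
    (g : V -> R) (h : 'I_m -> V -> R) (lam : 'I_m -> R) (x v : V) :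
  derivable g x v -> (forall i, derivable (h i) x v) ->
  derive (fun y => g y - \sum_(i < m) lam i * h i y) x v =
  derive g x v - \sum_(i < m) lam i * derive (h i) x v.
Proof.
move=> dg dh.
have -> : (fun y => g y - \sum_(i < m) lam i * h i y) =
    g - \sum_(i < m) (lam i \*: h i).
  by apply: funext => y; rewrite !fctE fct_sumE.
rewrite deriveB //; last by apply: derivable_sum => i; exact: derivableZ.
rewrite derive_sum; last by move=> i; exact: derivableZ.
by congr (_ - _); apply: eq_bigr => i _; rewrite deriveZ.
Qed.

Section Lagrangian.
Set Implicit Arguments. Unset Strict Implicit.
Context {R : realType} {n m : nat}.
Variables (f : 'rV[R]_n -> R) (c : 'I_m -> 'rV[R]_n -> R).

Lemma hessE (g : 'rV[R]_n -> R) x a b :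
  hess g x a b = derive (fun y => derive g y (ebasis R a)) x (ebasis R b).
Proof. by rewrite mxE. Qed.

Hypothesis f_diff : forall x, differentiable f x.
Hypothesis c_diff : forall i x, differentiable (c i) x.

Lemma gradLE x mu : gradL f c x mu = grad f x - gradc c x *m mu.
Proof.
apply/matrixP => k j; rewrite (ord1 j) /gradL /grad /lagr !mxE.
rewrite derive_sub_sum; last 2 first.
- exact: diff_derivable.
- by move=> i; exact: diff_derivable.
by congr (_ - _); apply: eq_bigr => i _; rewrite !mxE mulrC.
Qed.

Hypothesis df_diff :
  forall k x, differentiable (fun y => derive f y (ebasis R k)) x.
Hypothesis dc_diff :
  forall i k x, differentiable (fun y => derive (c i) y (ebasis R k)) x.

Lemma hessLE x lam a b :
  hessL f c x lam a b = hess f x a b - \sum_(i < m) lam i 0 * hess (c i) x a b.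
Proof.
rewrite /hessL [LHS](hessE (fun y => lagr f c y lam)) /lagr.
have -> : (fun y => derive (fun z => f z - \sum_(i < m) lam i 0 * c i z) y
                           (ebasis R a))
    = fun y => derive f y (ebasis R a) -
               \sum_(i < m) lam i 0 * derive (c i) y (ebasis R a).
  by apply: funext => y; apply: derive_sub_sum => [|i]; exact: diff_derivable.
rewrite derive_sub_sum; last 2 first.
- exact: diff_derivable.
- by move=> i; exact: diff_derivable.
congr (_ - _); first exact: esym (hessE f x a b).
by apply: eq_bigr => i _; rewrite -(hessE (c i) x a b).
Qed.

Lemma hessL_entry_le x (lam : 'cV[R]_m) gh (gch : 'I_m -> R) (K : R) :
  specnorm (hess f x) <= gh -> (forall i, specnorm (hess (c i) x) <= gch i) ->
  (forall i, `|lam i 0| <= K) ->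
  forall a b, `|hessL f c x lam a b| <= `|gh| + \sum_(i < m) K * `|gch i|.
Proof.
move=> hf hc lamK a b; rewrite hessLE; apply: le_trans (ler_normB _ _) _.
apply: lerD.
  exact: le_trans (entry_le_specnorm _ a b) (le_trans hf (ler_norm _)).
apply: le_trans (ler_norm_sum _ _ _) _.
apply: ler_sum => i _; rewrite normrM ler_pM //.
exact: le_trans (entry_le_specnorm _ a b) (le_trans (hc i) (ler_norm _)).
Qed.

End Lagrangian.

Theorem lemma3 (R : realType) (n m : nat)
  (f : 'rV[R]_n -> R) (c : 'I_m -> 'rV[R]_n -> R)
  (gf1 gf2 sigma0 : R) (gc1 gc2 : 'I_m -> R)
  (lamstar : 'rV[R]_n -> 'cV[R]_m) (P : 'rV[R]_n -> 'M[R]_n) :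
  C2 f -> (forall i, C2 (c i)) ->
  (* (a) Lipschitz continuity over Omega *)
  lipschitz_vec (feas c) (grad f) ->
  lipschitz_mat (feas c) (hess f) ->
  (forall i, lipschitz_vec (feas c) (grad (c i))) ->
  (forall i, lipschitz_mat (feas c) (hess (c i))) ->
  (* (b) uniform bounds over Omega *)
  (forall x, feas c x -> enorm (grad f x) <= gf1) ->
  (forall x, feas c x -> specnorm (hess f x) <= gf2) ->
  (forall i x, feas c x -> enorm (grad (c i) x) <= gc1 i) ->
  (forall i x, feas c x -> specnorm (hess (c i) x) <= gc2 i) ->
  (* (c) uniform lower bound on the smallest singular value *)
  0 < sigma0 ->
  (forall x, feas c x -> (0 < m)%N -> sigma0 <= sigma_min (gradc c x)) ->
  (* lambda*(x) is a least-squares multiplier *)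
  (forall x, feas c x -> forall mu : 'cV[R]_m,
     enorm (gradL f c x (lamstar x)) <= enorm (gradL f c x mu)) ->
  (* P_x is the orthogonal projection onto {v | grad c(x)^T v = 0} *)
  (forall x, is_orth_proj_kerT (gradc c x) (P x)) ->
  exists gammah : R, 0 <= gammah /\
    forall x, feas c x ->
      specnorm ((P x)^T *m hessL f c x (lamstar x) *m P x) <= gammah.
Proof.
move=> [f_diff [df_diff _]] C2c _ _ _ _ gradf_le hessf_le _ hessc_le s0 sigma_ge
  lsq projP.
have c_diff i := (C2c i).1; have dc_diff i := (C2c i).2.1.
set K := 2 * `|gf1| / sigma0.
set B := `|gf2| + \sum_(i < m) K * `|gc2 i|.
have K0 : 0 <= K by rewrite /K divr_ge0 ?mulr_ge0 // ltW.
have B0 : 0 <= B by rewrite /B addr_ge0 // sumr_ge0 // => i _; rewrite mulr_ge0.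
exists ((n * n)%:R * (n%:R * (n%:R * B))); split; first by rewrite !mulr_ge0.
move=> x fx.
have lamK i : `|lamstar x i 0| <= K.
  have m0 : (0 < m)%N by apply: leq_ltn_trans (ltn_ord i).
  have lsqx (mu : 'cV[R]_m) : enorm (grad f x - gradc c x *m lamstar x)
      <= enorm (grad f x - gradc c x *m mu).
    by rewrite -!gradLE //; exact: lsq.
  apply: le_trans (lsq_solution_entry_le s0 (sigma_ge x fx m0) lsqx i) _.
  rewrite ler_pM2r ?invr_gt0 // ler_pM2l //.
  exact: le_trans (gradf_le x fx) (ler_norm _).
apply: specnorm_le_entry_bound; apply: entry_trmx_mulmx_mulmx_le.
  exact: orth_proj_kerT_entry_le1 (projP x).
exact: hessL_entry_le (hessf_le x fx) (fun i => hessc_le i x fx) lamK.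
Qed.
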